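(* Let $\Lambda=\{\lambda_1,\dots,\lambda_N\}$ be a finite set of non-zero complex numbers such that (1) $\Lambda=\bar\Lambda$ (closed under complex conjugation), (2) $1\in\Lambda$, and (3) $|\lambda|\le1$ for all $\lambda\in\Lambda$. Then there exists a completely positive trace-preserving linear map $T:\mathcal{M}_d(\mathbb{C})\to\mathcal{M}_d(\mathbb{C})$ with $d\le 2\max\{N-1,1\}$ such that $\{\mathrm{spec}(T)\}\setminus\{0\}=\Lambda$. Conversely, if $\Lambda$ is the spectral set $\{\mathrm{spec}(T)\}$ of a positive trace-preserving linear map $T$ on some $\mathcal{M}_d(\mathbb{C})$, then $\Lambda$ satisfies (1)–(3).
   Context: $\{\mathrm{spec}(T)\}$ denotes the spectral set of $T$: the set (without multiplicities) of $\lambda\in\mathbb{C}$ for which $T-\lambda\,\mathrm{id}$ is not invertible on $\mathcal{M}_d(\mathbb{C})$. Positive: maps positive semidefinite matrices to positive semidefinite matrices; completely positive: $T\otimes\mathrm{id}_d$ is positive; trace-preserving: $\mathrm{tr}[T(X)]=\mathrm{tr}[X]$. *)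

(* Complex numbers are modelled by an arbitrary
   numClosedFieldType C (algebraically closed field with conjugation/order,
   e.g. algC; the statement is uniform in C). *)
From HB Require Import structures.
From mathcomp Require Import all_boot all_order all_algebra.
Set Implicit Arguments. Unset Strict Implicit. Unset Printing Implicit Defensive.
Import Order.TTheory GRing.Theory Num.Theory.
Local Open Scope ring_scope.

Definition adjmx (C : numClosedFieldType) m n (A : 'M[C]_(m, n)) : 'M[C]_(n, m) :=
  map_mx (fun x => x^*) A^T.

Definition psdmx (C : numClosedFieldType) n (A : 'M[C]_n) : Prop :=
  adjmx A = A /\ forall v : 'cV[C]_n, 0 <= (adjmx v *m A *m v) 0 0.

Definition in_spec (C : numClosedFieldType) d (T : 'M[C]_d -> 'M[C]_d) (l : C) : Prop :=
  ~ bijective (fun X => T X - l *: X).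

Definition positive_map (C : numClosedFieldType) d (T : 'M[C]_d -> 'M[C]_d) : Prop :=
  forall X, psdmx X -> psdmx (T X).

Definition trace_preserving (C : numClosedFieldType) d (T : 'M[C]_d -> 'M[C]_d) : Prop :=
  forall X, \tr (T X) = \tr X.

(* M_d ⊗ M_d is identified with M_(d*d) via the index pairing
   (a, b) |-> mxvec_index a b, a the index of the first tensor factor. *)
Definition pblock (C : numClosedFieldType) d (Y : 'M[C]_(d * d)) (b e : 'I_d) : 'M[C]_d :=
  \matrix_(a, c) Y (mxvec_index a b) (mxvec_index c e).

(* Z = (T ⊗ id_d) Y *)
Definition ampl_rel (C : numClosedFieldType) d (T : 'M[C]_d -> 'M[C]_d)
    (Y Z : 'M[C]_(d * d)) : Prop :=
  forall a b c e : 'I_d, Z (mxvec_index a b) (mxvec_index c e) = T (pblock Y b e) a c.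

Definition completely_positive (C : numClosedFieldType) d (T : 'M[C]_d -> 'M[C]_d) : Prop :=
  forall Y Z : 'M[C]_(d * d), ampl_rel T Y Z -> psdmx Y -> psdmx Z.

From HB Require Import structures.
From mathcomp Require Import all_boot all_order all_algebra ring.
Set Implicit Arguments. Unset Strict Implicit. Unset Printing Implicit Defensive.
Import Order.TTheory GRing.Theory Num.Theory.
Local Open Scope ring_scope.

(* Construction: for a Gram matrix M = G G^H with unit diagonal, the Schur multiplier
   X |-> M o X is trace preserving, and completely positive because its amplification is
   again a Schur multiplier by a Gram matrix (Schur product theorem). Its spectrum is the
   set of entries of M, the matrix units being eigenvectors. Listing Lambda \ {1} as
   l_1, ..., l_k (padded with 1), M = [[1, D], [D^H, 1]] with D = diag(l_i) is a Gram matrix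
   of size 2k since |l_i| <= 1, and its nonzero entries are exactly Lambda.

   Converse: by polarization a positive map commutes with X |-> X^H, so its spectrum is
   closed under conjugation; trace preservation gives tr o (T - id) = 0, so 1 is in the
   spectrum. If T X = z X, write X = U diag(c) P with U, P unitary and c >= 0, and let
   N = (U P)^H, so that tr (N X) = sum c_k. Diagonalizing N = sum mu_l q_l q_l^H with
   |mu_l| = 1, positivity of T on (u - t v)(u - t v)^H gives
   |q^H T(u v^H) q| <= (q^H T(u u^H) q + q^H T(v v^H) q) / 2, and summing over l with trace
   preservation yields |tr (N T(u v^H))| <= 1 for unit vectors u, v. Hence
   |z| sum c_k = |tr (N T X)| <= sum c_k. *)

Section Adjoint.
Variable C : numClosedFieldType.

Lemma adjmxE m n (A : 'M[C]_(m, n)) i j : adjmx A i j = (A j i)^*.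
Proof. by rewrite !mxE. Qed.

Lemma adjmx0 m n : adjmx (0 : 'M[C]_(m, n)) = 0.
Proof. by rewrite /adjmx trmx0 map_mx0. Qed.

Lemma adjmxD m n (A B : 'M[C]_(m, n)) : adjmx (A + B) = adjmx A + adjmx B.
Proof. by rewrite /adjmx linearD map_mxD. Qed.

Lemma adjmxB m n (A B : 'M[C]_(m, n)) : adjmx (A - B) = adjmx A - adjmx B.
Proof. by rewrite /adjmx linearB map_mxB. Qed.

Lemma adjmx_sum m n I (r : seq I) (P : pred I) (F : I -> 'M[C]_(m, n)) :
  adjmx (\sum_(i <- r | P i) F i) = \sum_(i <- r | P i) adjmx (F i).
Proof. exact: (big_morph _ (@adjmxD m n) (adjmx0 m n)). Qed.

Lemma adjmxZ m n a (A : 'M[C]_(m, n)) : adjmx (a *: A) = a^* *: adjmx A.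
Proof. by rewrite /adjmx linearZ map_mxZ. Qed.

Lemma adjmxK m n (A : 'M[C]_(m, n)) : adjmx (adjmx A) = A.
Proof. by apply/matrixP=> i j; rewrite !adjmxE conjCK. Qed.

Lemma adjmxM m n p (A : 'M[C]_(m, n)) (B : 'M[C]_(n, p)) :
  adjmx (A *m B) = adjmx B *m adjmx A.
Proof. by rewrite /adjmx trmx_mul map_mxM. Qed.

Lemma adjmx_diag n (v : 'rV[C]_n) : adjmx (diag_mx v) = diag_mx (map_mx Num.conj v).
Proof. by rewrite /adjmx tr_diag_mx map_diag_mx. Qed.

Lemma adjmx_scalar n a : adjmx (a%:M : 'M[C]_n) = a^*%:M.
Proof. by rewrite /adjmx tr_scalar_mx map_scalar_mx. Qed.

Lemma adjmx_block m1 m2 n1 n2 (A : 'M[C]_(m1, n1)) (B : 'M[C]_(m1, n2))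
   (D1 : 'M[C]_(m2, n1)) (D2 : 'M[C]_(m2, n2)) :
  adjmx (block_mx A B D1 D2) = block_mx (adjmx A) (adjmx D1) (adjmx B) (adjmx D2).
Proof. by rewrite /adjmx tr_block_mx map_block_mx. Qed.

Lemma adjmx_col m1 m2 n (A : 'M[C]_(m1, n)) (B : 'M[C]_(m2, n)) :
  adjmx (col_mx A B) = row_mx (adjmx A) (adjmx B).
Proof. by rewrite /adjmx tr_col_mx map_row_mx. Qed.

Lemma adjmx_delta m n (i : 'I_m) (j : 'I_n) :
  adjmx (delta_mx i j : 'M[C]_(m, n)) = delta_mx j i.
Proof. by rewrite /adjmx trmx_delta map_delta_mx. Qed.

Definition qform n (v : 'cV[C]_n) (A : 'M[C]_n) : C := (adjmx v *m A *m v) 0 0.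

Lemma qformE n (v : 'cV[C]_n) A : qform v A = \sum_i \sum_j (v i 0)^* * A i j * v j 0.
Proof.
rewrite /qform mxE [RHS]exchange_big; apply: eq_bigr => j _.
by rewrite mxE mulr_suml; apply: eq_bigr => i _; rewrite adjmxE.
Qed.

Lemma qformD n (v : 'cV[C]_n) A B : qform v (A + B) = qform v A + qform v B.
Proof. by rewrite /qform mulmxDr mulmxDl mxE. Qed.

Lemma qformN n (v : 'cV[C]_n) A : qform v (- A) = - qform v A.
Proof. by rewrite /qform mulmxN mulNmx mxE. Qed.

Lemma qformZ n (v : 'cV[C]_n) a A : qform v (a *: A) = a * qform v A.
Proof. by rewrite /qform -scalemxAr -scalemxAl mxE. Qed.

Lemma qform_adjmx n (v : 'cV[C]_n) A : qform v (adjmx A) = (qform v A)^*.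
Proof. by rewrite /qform -adjmxE !adjmxM adjmxK mulmxA. Qed.

Lemma qform_row n (P M : 'M[C]_n) l :
  qform (adjmx (row l P)) M = (P *m M *m adjmx P) l l.
Proof.
rewrite /qform adjmxK mxE [RHS]mxE; apply: eq_bigr => k _.
by rewrite -row_mul !mxE.
Qed.

Lemma sum_qform_rows n (P M : 'M[C]_n) :
  adjmx P *m P = 1%:M -> \sum_l qform (adjmx (row l P)) M = \tr M.
Proof.
move=> P_unitary; rewrite -[in RHS](mul1mx M) -P_unitary -mulmxA mxtrace_mulC.
by apply: eq_bigr => l _; rewrite qform_row.
Qed.

End Adjoint.

Section Spectrum.
Variable C : numClosedFieldType.

Lemma in_specP d (T : {linear 'M[C]_d -> 'M[C]_d}) z :
  in_spec T z <-> exists2 X, X != 0 & T X = z *: X.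
Proof.
pose F := (linfun T - z *: \1)%VF.
have FE X : F X = T X - z *: X.
  by rewrite add_lfunE opp_lfunE scale_lfunE id_lfunE lfunE.
split=> [T_z | [X X_neq0 TX] [g gK _]].
  have [kerF0 | kerF_neq0] := eqVneq (lker F) 0%VS.
    case: T_z; exists (F^-1)%VF => X /=; rewrite -FE.
      by rewrite lker0_lfunK ?kerF0.
    by rewrite lker0_lfunVK ?kerF0.
  exists (vpick (lker F)); first by rewrite vpick0.
  by have := memv_pick (lker F); rewrite memv_ker FE subr_eq0 => /eqP.
apply/negP: X_neq0; apply/negPn/eqP.
by rewrite -(gK X) -(gK 0) /= TX subrr linear0 scaler0 subr0.
Qed.

Lemma in_spec1 d (T : {linear 'M[C]_d -> 'M[C]_d}) :
  (0 < d)%N -> trace_preserving T -> in_spec T 1.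
Proof.
move=> d_gt0 T_tp [g _ gK].
have := congr1 mxtrace (gK 1%:M).
rewrite /= raddfB /= T_tp scale1r subrr mxtrace1 => /eqP.
by rewrite eq_sym pnatr_eq0 eqn0Ngt d_gt0.
Qed.

End Spectrum.

Section Positive.
Variable C : numClosedFieldType.

Lemma psdmx_outer n (w : 'cV[C]_n) : psdmx (w *m adjmx w).
Proof.
split=> [|v]; first by rewrite adjmxM adjmxK.
have -> : adjmx v *m (w *m adjmx w) *m v = (adjmx v *m w) *m adjmx (adjmx v *m w).
  by rewrite adjmxM adjmxK !mulmxA.
by rewrite mxE big_ord1 adjmxE mul_conjC_ge0.
Qed.

Lemma outer_polarization n (u w : 'cV[C]_n) (R := fun x : 'cV[C]_n => x *m adjmx x) :
  R (u + w) - R u - R w = u *m adjmx w + w *m adjmx u /\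
  R (u + 'i *: w) - R u - R w = 'i *: (w *m adjmx u - u *m adjmx w).
Proof.
rewrite /R /= !adjmxD adjmxZ conjCi !(mulmxDl, mulmxDr) -!scalemxAl -!scalemxAr.
rewrite scalerA mulrN mulCii opprK scale1r scaleNr scalerBr.
have cancel (a x y b : 'M[C]_n) : a + x + (y + b) - a - b = x + y.
  by rewrite addrA [_ + b - a]addrAC addrK addrC !addrA addNr add0r.
by split; rewrite cancel // addrC.
Qed.

Lemma positive_map_adjmx_outer d (T : {linear 'M[C]_d -> 'M[C]_d}) :
  positive_map T -> forall u w : 'cV[C]_d, adjmx (T (u *m adjmx w)) = T (w *m adjmx u).
Proof.
move=> T_pos u w.
have herm (x : 'cV_d) : adjmx (T (x *m adjmx x)) = T (x *m adjmx x).
  by case: (T_pos _ (psdmx_outer x)).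
have /= [re im] := outer_polarization u w.
set a := T (u *m adjmx w); set b := T (w *m adjmx u).
have sum_herm : adjmx a + adjmx b = a + b.
  by rewrite -adjmxD -linearD -re !linearB !adjmxB !herm.
have dif_herm : adjmx a - adjmx b = b - a.
  have := congr1 (fun X => T X) im.
  rewrite /= linearZ /= !linearB /= -/a -/b -scalerBr => imT.
  have : adjmx ('i *: (b - a)) = 'i *: (b - a) by rewrite -imT !adjmxB !herm.
  rewrite adjmxZ adjmxB conjCi => /(congr1 ( *:%R 'i)).
  rewrite !scalerA mulrN mulCii opprK scale1r scaleN1r => /(congr1 -%R).
  by rewrite opprK opprB.
have := congr1 (fun X => X + (b - a)) sum_herm; rewrite -{1}dif_herm.
rewrite addrACA subrr addr0 addrC addrA subrK -!mulr2n -!scaler_nat.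
by move/(scalerI _); apply; rewrite pnatr_eq0.
Qed.

Lemma positive_map_adjmx d (T : {linear 'M[C]_d -> 'M[C]_d}) :
  positive_map T -> forall X, adjmx (T X) = T (adjmx X).
Proof.
move=> T_pos X; pose e j : 'cV[C]_d := delta_mx j 0.
have -> : X = \sum_j (X *m e j) *m adjmx (e j).
  under eq_bigr do rewrite -mulmxA adjmx_delta mul_delta_mx.
  by rewrite -mulmx_sumr -mx1_sum_delta mulmx1.
rewrite [T (\sum_j _)](raddf_sum T) !adjmx_sum (raddf_sum T); apply: eq_bigr => j _.
by rewrite positive_map_adjmx_outer // [in RHS]adjmxM adjmxK.
Qed.

Lemma in_spec_conj d (T : {linear 'M[C]_d -> 'M[C]_d}) z :
  positive_map T -> in_spec T z -> in_spec T z^*.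
Proof.
move=> T_pos /in_specP[X X_neq0 TX]; apply/in_specP; exists (adjmx X).
  by apply: contra X_neq0 => /eqP/(congr1 (@adjmx C d d)); rewrite adjmxK adjmx0 => ->.
by rewrite -positive_map_adjmx // TX adjmxZ.
Qed.

End Positive.

Section Hadamard.
Variable C : numClosedFieldType.

Definition hadamard n (M X : 'M[C]_n) : 'M[C]_n := \matrix_(i, j) (M i j * X i j).

Lemma hadamard_is_linear n (M : 'M[C]_n) : linear (hadamard M).
Proof. by move=> a X Y; apply/matrixP=> i j; rewrite !mxE mulrDr mulrCA. Qed.
HB.instance Definition _ n (M : 'M[C]_n) :=
  GRing.isLinear.Build C 'M[C]_n 'M[C]_n _ (hadamard M) (hadamard_is_linear M).

Lemma psdmx_hadamard_gram n k (G : 'M[C]_(n, k)) (Y : 'M[C]_n) :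
  psdmx Y -> psdmx (hadamard (G *m adjmx G) Y).
Proof.
move=> [Y_herm Y_pos]; split.
  apply/matrixP=> i j; rewrite adjmxE !mxE rmorphM /= -[(Y j i)^*]adjmxE Y_herm.
  congr (_ * _); rewrite rmorph_sum; apply: eq_bigr => t _.
  by rewrite rmorphM /= !adjmxE conjCK mulrC.
move=> v; rewrite -/(qform v _); pose w t : 'cV[C]_n := \col_q ((G q t)^* * v q 0).
have -> : qform v (hadamard (G *m adjmx G) Y) = \sum_t qform (w t) Y.
  under [RHS]eq_bigr do rewrite qformE.
  rewrite qformE [RHS]exchange_big; apply: eq_bigr => i _.
  rewrite [RHS]exchange_big; apply: eq_bigr => j _.
  rewrite !mxE mulr_suml mulr_sumr mulr_suml; apply: eq_bigr => t _.
  by rewrite !mxE rmorphM /= conjCK; ring.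
by apply: sumr_ge0 => t _; apply: Y_pos.
Qed.

Definition mxvec_row d (p : 'I_(d * d)) : 'I_d :=
  (enum_val (cast_ord (esym (mxvec_cast d d)) p)).1.

Lemma mxvec_rowE d (a b : 'I_d) : mxvec_row (mxvec_index a b) = a.
Proof. by rewrite /mxvec_row /mxvec_index cast_ordK enum_rankK. Qed.

Lemma hadamard_gram_cp d k (G : 'M[C]_(d, k)) : completely_positive (hadamard (G *m adjmx G)).
Proof.
move=> Y Z YZ Y_psd; pose G' : 'M[C]_(d * d, k) := \matrix_(p, t) G (mxvec_row p) t.
suff -> : Z = hadamard (G' *m adjmx G') Y by apply: psdmx_hadamard_gram.
apply/matrixP=> p q; case/mxvec_indexP: p => a b; case/mxvec_indexP: q => c e.
rewrite YZ !mxE; congr (_ * _); apply: eq_bigr => t _.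
by rewrite !mxE !mxvec_rowE.
Qed.

Lemma hadamard_tp n (M : 'M[C]_n) : (forall i, M i i = 1) -> trace_preserving (hadamard M).
Proof. by move=> M1 X; apply: eq_bigr => i _; rewrite mxE M1 mul1r. Qed.

Lemma in_spec_hadamard n (M : 'M[C]_n) z : in_spec (hadamard M) z <-> exists i j, M i j = z.
Proof.
have hadamardBZ X : hadamard M X - z *: X = hadamard (M - const_mx z) X.
  by apply/matrixP=> i j; rewrite !mxE mulrBl.
split=> [M_z | [a [c Mac]]]; last first.
  apply/in_specP; exists (delta_mx a c).
    by apply/eqP => /matrixP/(_ a c)/eqP; rewrite !mxE !eqxx oner_eq0.
  apply/matrixP=> i j; rewrite !mxE.
  by case: eqP => [->|]; case: eqP => [->|]; rewrite ?Mac ?mulr0 ?mulr1.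
have [/existsP[i /existsP[j /eqP]]|no_z] := boolP [exists i, exists j, M i j == z].
  by exists i, j.
have Mz_neq0 i j : M i j - z != 0.
  rewrite subr_eq0; apply: contra no_z => Mij.
  by apply/existsP; exists i; apply/existsP; exists j.
case: M_z; exists (hadamard (map_mx GRing.inv (M - const_mx z))) => X;
  apply/matrixP=> i j; rewrite /= ?hadamardBZ !mxE.
  exact: mulKf.
exact: mulVKf.
Qed.

End Hadamard.

Section SpectralGram.
Variables (C : numClosedFieldType) (k : nat) (lam : 'rV[C]_k).

Definition spectral_gram : 'M[C]_(k + k) :=
  block_mx 1%:M (diag_mx lam) (diag_mx (map_mx Num.conj lam)) 1%:M.

Definition spectral_gram_factor : 'M[C]_(k + k) :=
  block_mx 1%:M 0
    (diag_mx (map_mx Num.conj lam)) (diag_mx (\row_i sqrtC (1 - `|lam 0 i| ^+ 2))).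

Lemma spectral_gram_factorE : (forall i, `|lam 0 i| <= 1) ->
  spectral_gram_factor *m adjmx spectral_gram_factor = spectral_gram.
Proof.
move=> lam_le1; rewrite adjmx_block adjmx_scalar adjmx0 !adjmx_diag mulmx_block.
rewrite conjC1 !mul1mx !mulmx1 !mul0mx !mulmx0 !addr0 !mulmx_diag.
congr block_mx; apply/matrixP => i j; rewrite !mxE ?conjCK //.
case: eqP => [->|]; rewrite ?mulr1n ?mulr0n ?addr0 //.
have sqrt_real : sqrtC (1 - `|lam 0 j| ^+ 2) \is Num.real.
  by rewrite ger0_real // sqrtC_ge0 subr_ge0 exprn_ile1.
by rewrite (conj_Creal sqrt_real) -expr2 sqrtCK mulrC -normCK addrC subrK.
Qed.

Lemma spectral_gram_diag i : spectral_gram i i = 1.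
Proof.
by case: (split_ordP i) => j ->; rewrite ?block_mxEul ?block_mxEdr mxE eqxx.
Qed.

Lemma spectral_gram_entryP z : (0 < k)%N -> z != 0 ->
  (exists a c, spectral_gram a c = z) <-> z = 1 \/ exists i, z = lam 0 i \/ z = (lam 0 i)^*.
Proof.
move=> k_gt0 z_neq0; split=> [[a [c Eac]] | [->|[i [->|->]]]].
- have nat_entry (x : C) (b : bool) : x *+ b != 0 -> x *+ b = x.
    by case: b; rewrite ?mulr1n ?mulr0n ?eqxx.
  move: z_neq0; rewrite -Eac; case: (split_ordP a) => a' ->; case: (split_ordP c) => c' ->;
   rewrite ?block_mxEul ?block_mxEur ?block_mxEdl ?block_mxEdr !mxE;
   move=> /nat_entry /= ->.
  + by left.
  + by right; exists a'; left.
  + by right; exists a'; right.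
  + by left.
- by exists (lshift k (Ordinal k_gt0)), (lshift k (Ordinal k_gt0)); rewrite spectral_gram_diag.
- by exists (lshift k i), (rshift k i); rewrite block_mxEur !mxE eqxx.
- by exists (rshift k i), (lshift k i); rewrite block_mxEdl !mxE eqxx.
Qed.

Lemma hadamard_spectral_gram :
  (0 < k)%N -> (forall i, `|lam 0 i| <= 1) ->
  [/\ completely_positive (hadamard spectral_gram),
      trace_preserving (hadamard spectral_gram) &
      forall z, z != 0 -> in_spec (hadamard spectral_gram) z <->
        z = 1 \/ exists i, z = lam 0 i \/ z = (lam 0 i)^*].
Proof.
move=> k_gt0 lam_le1; split.
- by rewrite -spectral_gram_factorE //; apply: hadamard_gram_cp.
- exact/hadamard_tp/spectral_gram_diag.
move=> z z_neq0; rewrite in_spec_hadamard; exact: spectral_gram_entryP.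
Qed.

End SpectralGram.

Lemma row_enum_rem (T : eqType) k (s : seq T) x :
  uniq s -> x \in s -> ((size s).-1 <= k)%N ->
  exists r : 'rV[T]_k,
    (forall i, r 0 i \in s) /\ (forall y, y \in s -> y = x \/ exists i, y = r 0 i).
Proof.
move=> s_uniq s_x size_s; exists (\row_i nth x (rem x s) i); split=> [i|y s_y].
  rewrite mxE; have [i_lt|i_ge] := ltnP i (size (rem x s)).
    exact/mem_rem/mem_nth.
  by rewrite nth_default.
have [->|y_neq_x] := eqVneq y x; [by left | right].
have y_rem : y \in rem x s by rewrite (mem_rem_uniq _ s_uniq) inE y_neq_x.
have y_idx : (index y (rem x s) < k)%N.
  by rewrite (leq_trans _ size_s) // -(size_rem s_x) index_mem.
by exists (Ordinal y_idx); rewrite mxE nth_index.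
Qed.

Section SingularValues.
Variable C : numClosedFieldType.

Lemma normalmx_spectral n (A : 'M[C]_n) : A *m adjmx A = adjmx A *m A ->
  exists P (e : 'rV[C]_n),
    [/\ P *m adjmx P = 1%:M, adjmx P *m P = 1%:M & A = adjmx P *m diag_mx e *m P].
Proof.
move=> /normalmxP/orthomx_spectralP A_spec.
have P_unitary := spectral_unitarymx A.
have P_inv : invmx (spectralmx A) = adjmx (spectralmx A) := invmx_unitary P_unitary.
exists (spectralmx A), (spectral_diag A); split.
- exact/unitarymxP.
- by rewrite -P_inv mulVmx // spectral_unit.
- by rewrite {1}A_spec P_inv.
Qed.

Lemma row_normalize n (v : 'rV[C]_n) : v != 0 ->
  exists2 a : C, 0 < a & (a^-1 *: v) *m adjmx (a^-1 *: v) = 1%:M.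
Proof.
move=> v_neq0; have := dotmx_is_dotmx v_neq0; rewrite dotmxE.
set t := (v *m adjmx v) 0 0 => t_gt0.
have sqrt_t_gt0 : 0 < sqrtC t by rewrite sqrtC_gt0.
exists (sqrtC t) => //.
rewrite adjmxZ -scalemxAl -scalemxAr scalerA (mx11_scalar (v *m adjmx v)) -/t.
rewrite conj_Creal ?realV ?gtr0_real // scale_scalar_mx -invfM -expr2 sqrtCK.
by rewrite mulVf // gt_eqF.
Qed.

Lemma mxrank_col m1 m2 n (A : 'M[C]_(m1, n)) (B : 'M[C]_(m2, n)) :
  (\rank (col_mx A B) <= \rank A + \rank B)%N.
Proof. by rewrite -addsmxE mxrank_adds_leqif. Qed.

Lemma orthonormal_rows_extend m p n (S : 'M[C]_(m, n)) (Z : 'M[C]_(p, n)) (r : 'rV[C]_n) :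
  (m + \rank Z < n)%N -> S *m adjmx S = 1%:M -> S *m adjmx r = 0 -> r *m adjmx Z = 0 ->
  exists (s : 'rV[C]_n) (x : C),
    [/\ s *m adjmx s = 1%:M, S *m adjmx s = 0, s *m adjmx Z = 0, 0 <= x & r = x *: s].
Proof.
move=> rank_lt S_unitary Sr rZ.
have [r0|r_neq0] := eqVneq r 0; last first.
  have [a a_gt0 s_unitary] := row_normalize r_neq0.
  exists (a^-1 *: r), a; split => //.
  - by rewrite adjmxZ -scalemxAr Sr scaler0.
  - by rewrite -scalemxAl rZ scaler0.
  - exact: ltW.
  - by rewrite scalerA mulfV ?scale1r ?gt_eqF.
have : kermx (adjmx (col_mx S Z)) != 0.
  rewrite -mxrank_eq0 mxrank_ker /adjmx mxrank_map mxrank_tr -lt0n subn_gt0.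
  apply: leq_ltn_trans (mxrank_col S Z) _.
  by apply: leq_ltn_trans rank_lt; rewrite leq_add2r rank_leq_row.
case/rowV0Pn=> v /sub_kermxP; rewrite adjmx_col mul_mx_row.
move=> /eqP; rewrite row_mx_eq0 => /andP[/eqP vS /eqP vZ] v_neq0.
have [a _ s_unitary] := row_normalize v_neq0.
exists (a^-1 *: v), 0; split => //.
- by rewrite -[S]adjmxK -adjmxM -scalemxAl vS scaler0 adjmx0.
- by rewrite -scalemxAl vZ scaler0.
- by rewrite r0 scale0r.
Qed.

(* The rows of Z are those that the rows of S must avoid; the induction adds the row of R
   being processed to Z, which is what makes a zero row of R harmless. *)
Lemma orthogonal_rows_factor m : forall n p (R : 'M[C]_(m, n)) (Z : 'M[C]_(p, n)),
  (m + \rank Z <= n)%N -> is_diag_mx (R *m adjmx R) -> R *m adjmx Z = 0 ->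
  exists S (c : 'rV[C]_m), [/\ S *m adjmx S = 1%:M, S *m adjmx Z = 0,
    (forall i, 0 <= c 0 i) & R = diag_mx c *m S].
Proof.
elim: m => [|m IHm] n p R Z rank_le R_diag RZ.
  by exists 0, 0; split; rewrite ?flatmx0 // => -[].
move: R R_diag RZ rank_le; rewrite -addn1 => R.
rewrite -[R]vsubmxK; set R' := usubmx R; set r := dsubmx R.
rewrite adjmx_col mul_col_row is_diag_block_mx //.
case/and4P=> /eqP R'r _ R'_diag _.
rewrite mul_col_mx => /eqP; rewrite col_mx_eq0 => /andP[/eqP R'Z /eqP rZ] rank_le.
have R'Zr : R' *m adjmx (col_mx Z r) = 0 by rewrite adjmx_col mul_mx_row R'Z R'r row_mx0.
have rank_Zr : (m + \rank (col_mx Z r) <= n)%N.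
  apply: leq_trans rank_le; rewrite -addnA leq_add2l.
  by apply: leq_trans (mxrank_col Z r) _; rewrite addnC leq_add2r rank_leq_row.
have [S' [c' [S'_unitary]]] := IHm n (p + 1)%N R' (col_mx Z r) rank_Zr R'_diag R'Zr.
rewrite adjmx_col mul_mx_row => /eqP; rewrite row_mx_eq0 => /andP[/eqP S'Z /eqP S'r].
move=> c'_ge0 R'E.
have rank_lt : (m + \rank Z < n)%N by rewrite addnAC addn1 in rank_le.
have [s [x [s_unitary S's sZ x_ge0 rE]]] :=
  orthonormal_rows_extend rank_lt S'_unitary S'r rZ.
exists (col_mx S' s), (row_mx c' (const_mx x)); split.
- rewrite adjmx_col mul_col_row S'_unitary S's s_unitary.
  by rewrite -[s *m _]adjmxK adjmxM adjmxK S's adjmx0 -scalar_mx_block.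
- by rewrite mul_col_mx S'Z sZ col_mx0.
- by move=> i; case: (split_ordP i) => j ->; rewrite ?row_mxEl ?row_mxEr ?mxE.
- rewrite R'E rE diag_mx_row mul_block_col !mul0mx addr0 add0r.
  by rewrite diag_const_mx mul_scalar_mx.
Qed.

Lemma svd_mx d (X : 'M[C]_d) : exists U P (c : 'rV[C]_d),
  [/\ U *m adjmx U = 1%:M, P *m adjmx P = 1%:M, (forall i, 0 <= c 0 i)
    & X = U *m diag_mx c *m P].
Proof.
have XX_normal :
    (adjmx X *m X) *m adjmx (adjmx X *m X) = adjmx (adjmx X *m X) *m (adjmx X *m X).
  by rewrite adjmxM adjmxK.
have [P [e [P_unitary P'_unitary XXE]]] := normalmx_spectral XX_normal.
set G := X *m adjmx P.
have GG : adjmx G *m G = diag_mx e.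
  rewrite /G adjmxM adjmxK mulmxA -(mulmxA P) XXE !mulmxA P_unitary mul1mx.
  by rewrite -mulmxA P_unitary mulmx1.
have G'_diag : is_diag_mx (adjmx G *m adjmx (adjmx G)) by rewrite adjmxK GG diag_mx_is_diag.
have rank0 : (d + \rank (0 : 'M[C]_(0, d))%R <= d)%N by rewrite mxrank0 addn0.
have G'0 : adjmx G *m adjmx (0 : 'M[C]_(0, d))%R = 0 by rewrite adjmx0 mulmx0.
have [S [c [S_unitary _ c_ge0 G'E]]] := orthogonal_rows_factor rank0 G'_diag G'0.
have c_real : map_mx Num.conj c = c.
  by apply/rowP=> i; rewrite mxE conj_Creal // ger0_real.
exists (adjmx S), P, c; split => //.
  by rewrite adjmxK; apply: mulmx1C.
have -> : X = G *m P by rewrite /G -mulmxA P'_unitary mulmx1.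
by rewrite -[G]adjmxK G'E adjmxM adjmx_diag c_real.
Qed.

Lemma trace_diag_unitary n (c : 'rV[C]_n) (U P : 'M[C]_n) :
  U *m adjmx U = 1%:M -> P *m adjmx P = 1%:M ->
  \tr (adjmx (U *m P) *m (U *m diag_mx c *m P)) = \sum_k c 0 k.
Proof.
move=> U_unitary P_unitary; rewrite adjmxM !mulmxA -(mulmxA (adjmx P)) (mulmx1C U_unitary).
by rewrite mulmx1 mxtrace_mulC mulmxA P_unitary mul1mx mxtrace_diag.
Qed.

End SingularValues.

Section Contraction.
Variables (C : numClosedFieldType) (d : nat) (T : {linear 'M[C]_d -> 'M[C]_d}).
Hypothesis T_pos : positive_map T.

Lemma qform_outer_le (q u v : 'cV[C]_d) :
  `|qform q (T (u *m adjmx v))| *+ 2 <=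
    qform q (T (u *m adjmx u)) + qform q (T (v *m adjmx v)).
Proof.
have qform_ge0 w : 0 <= qform q (T (w *m adjmx w)) := proj2 (T_pos (psdmx_outer w)) q.
set c := qform q (T (u *m adjmx v)).
have [->|c_neq0] := eqVneq c 0; first by rewrite normr0 mul0rn addr_ge0.
have cvu : qform q (T (v *m adjmx u)) = c^*.
  by rewrite -positive_map_adjmx_outer // qform_adjmx.
have c_norm_neq0 : `|c| != 0 by rewrite normr_eq0.
have norm_real : `|c|^-1 \is Num.real by rewrite realV normr_real.
(* the phase t = c / |c| turns the cross terms of (u - t v)(u - t v)^* into -2|c| *)
set t := c / `|c|.
have tc : t^* * c = `|c|.
  rewrite /t rmorphM /= (conj_Creal norm_real) mulrAC [c^* * c]mulrC -normCK.
  by rewrite expr2 mulfK.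
have tc' : t * c^* = `|c|.
  by rewrite -[RHS]conj_Creal ?normr_real // -tc rmorphM /= conjCK mulrC.
have tt : t * t^* = 1.
  rewrite /t rmorphM /= (conj_Creal norm_real) mulrACA -normCK expr2 -invfM mulfV //.
  by rewrite mulf_neq0.
have := qform_ge0 (u - t *: v).
rewrite adjmxB adjmxZ mulmxBl !mulmxBr -!scalemxAl -!scalemxAr scalerA tt scale1r.
rewrite !linearB !linearZ /= !(qformD, qformN, qformZ) cvu -/c !mulrN tc tc' opprK.
by rewrite [- _ + _]addrC addrACA -opprD subr_ge0 mulr2n.
Qed.

Hypothesis T_tp : trace_preserving T.

Lemma trace_unitary_outer_le1 (N : 'M[C]_d) (u v : 'cV[C]_d) :
  N *m adjmx N = 1%:M -> adjmx N *m N = 1%:M ->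
  adjmx u *m u = 1%:M -> adjmx v *m v = 1%:M ->
  `|\tr (N *m T (u *m adjmx v))| <= 1.
Proof.
move=> N_unitary N'_unitary u_unit v_unit.
have N_normal : N *m adjmx N = adjmx N *m N by rewrite N_unitary N'_unitary.
have [P [mu [P_unitary P'_unitary NE]]] := normalmx_spectral N_normal.
pose q l := adjmx (row l P).
have trE M : \tr (N *m M) = \sum_l mu 0 l * qform (q l) M.
  rewrite NE -!mulmxA mxtrace_mulC -!mulmxA mul_diag_mx; apply: eq_bigr => l _.
  by rewrite mxE qform_row !mulmxA.
have mu_norm l : `|mu 0 l| = 1.
  have : diag_mx mu *m adjmx (diag_mx mu) = 1%:M.
    have -> : diag_mx mu = P *m N *m adjmx P.
      by rewrite NE !mulmxA P_unitary mul1mx -mulmxA P_unitary mulmx1.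
    rewrite !adjmxM adjmxK !mulmxA -(mulmxA (P *m N)) P'_unitary mulmx1.
    by rewrite -(mulmxA P) N_unitary mulmx1 P_unitary.
  move/matrixP/(_ l l); rewrite mul_diag_mx !mxE eqxx !mulr1n -normCK => /eqP.
  by rewrite sqrp_eq1 ?normr_ge0 // => /eqP.
have qform_sum (w : 'cV[C]_d) :
    adjmx w *m w = 1%:M -> \sum_l qform (q l) (T (w *m adjmx w)) = 1.
  by move=> w_unit; rewrite sum_qform_rows // T_tp mxtrace_mulC w_unit mxtrace1.
rewrite trE; apply: le_trans (ler_norm_sum _ _ _) _.
under eq_bigr do rewrite normrM mu_norm mul1r.
rewrite -(@ler_pMn2r _ 2) // -sumrMnl.
apply: le_trans (ler_sum _ (fun l _ => qform_outer_le (q l) u v)) _.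
by rewrite big_split /= !qform_sum.
Qed.

Lemma trace_svd_le (U P : 'M[C]_d) (c : 'rV[C]_d) :
  U *m adjmx U = 1%:M -> P *m adjmx P = 1%:M -> (forall i, 0 <= c 0 i) ->
  `|\tr (adjmx (U *m P) *m T (U *m diag_mx c *m P))| <= \sum_k c 0 k.
Proof.
move=> U_unitary P_unitary c_ge0.
have U'_unitary := mulmx1C U_unitary; have P'_unitary := mulmx1C P_unitary.
pose N := adjmx (U *m P); pose u k := col k U; pose v k := adjmx (row k P).
have N_unitary : N *m adjmx N = 1%:M.
  by rewrite /N adjmxK adjmxM mulmxA -(mulmxA (adjmx P)) U'_unitary mulmx1.
have N'_unitary : adjmx N *m N = 1%:M.
  by rewrite /N adjmxK adjmxM mulmxA -(mulmxA U) P_unitary mulmx1.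
have u_unit k : adjmx (u k) *m u k = 1%:M.
  apply/matrixP=> i j; rewrite !ord1; move/matrixP: U'_unitary => /(_ k k).
  by rewrite !mxE eqxx => <-; apply: eq_bigr => t _; rewrite !mxE.
have v_unit k : adjmx (v k) *m v k = 1%:M.
  apply/matrixP=> i j; rewrite !ord1; move/matrixP: P_unitary => /(_ k k).
  by rewrite !mxE eqxx => <-; apply: eq_bigr => t _; rewrite /v adjmxK !mxE.
have -> : U *m diag_mx c *m P = \sum_k c 0 k *: (u k *m adjmx (v k)).
  apply/matrixP=> i j; rewrite summxE mxE; apply: eq_bigr => k _.
  by rewrite mul_mx_diag /v adjmxK !mxE big_ord1 !mxE mulrCA mulrA.
rewrite [T _]linear_sum mulmx_sumr raddf_sum; apply: le_trans (ler_norm_sum _ _ _) _.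
apply: ler_sum => k _; rewrite linearZ /= -scalemxAr mxtraceZ normrM ger0_norm //.
by rewrite ler_piMr // trace_unitary_outer_le1.
Qed.

Lemma in_spec_norm_le1 z : in_spec T z -> `|z| <= 1.
Proof.
move=> /in_specP[X X_neq0 TX].
have [U [P [c [U_unitary P_unitary c_ge0 XE]]]] := svd_mx X.
have c_sum_gt0 : 0 < \sum_k c 0 k.
  rewrite lt_def sumr_ge0 // andbT; apply: contra X_neq0 => /eqP /psumr_eq0P c0; rewrite XE.
  have -> : c = 0 by apply/rowP=> k; rewrite c0 ?mxE.
  by rewrite linear0 mulmx0 mul0mx.
rewrite -(ler_pM2r c_sum_gt0) mul1r -{1}(ger0_norm (ltW c_sum_gt0)) -normrM.
rewrite -{1}(trace_diag_unitary c U_unitary P_unitary) -mxtraceZ scalemxAr -XE -TX XE.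
exact: trace_svd_le.
Qed.

End Contraction.

Theorem theorem3 (C : numClosedFieldType) :
  (forall Lambda : seq C,
     uniq Lambda ->
     (forall l, l \in Lambda -> l != 0) ->
     (forall l, l \in Lambda -> l^* \in Lambda) ->
     1 \in Lambda ->
     (forall l, l \in Lambda -> `|l| <= 1) ->
     exists d : nat, (d <= 2 * maxn (size Lambda).-1 1)%N /\
       exists T : {linear 'M[C]_d -> 'M[C]_d},
         completely_positive T /\ trace_preserving T /\
         (forall z : C, (in_spec T z /\ z != 0) <-> z \in Lambda))
  /\
  (forall (d : nat) (T : {linear 'M[C]_d -> 'M[C]_d}),
     (0 < d)%N -> positive_map T -> trace_preserving T ->
     (forall z, in_spec T z -> in_spec T z^*) /\
     in_spec T 1 /\
     (forall z, in_spec T z -> `|z| <= 1)).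
Proof.
split=> [Lambda L_uniq L_neq0 L_conj L_1 L_le1 | d T d_gt0 T_pos T_tp]; last first.
  split=> [z|]; first exact: in_spec_conj.
  by split=> [|z]; [exact: in_spec1 | exact: in_spec_norm_le1].
set k := maxn (size Lambda).-1 1.
have k_gt0 : (0 < k)%N by rewrite leq_max orbT.
have [lam [lam_L L_lam]] := row_enum_rem (k := k) L_uniq L_1 (leq_maxl _ _).
have [T_cp T_tp T_spec] := hadamard_spectral_gram k_gt0 (fun i => L_le1 _ (lam_L i)).
exists (k + k)%N; split; first by rewrite addnn -mul2n.
exists (hadamard (spectral_gram lam)); do 2!split => //.
move=> z; split=> [[/(T_spec _) Tz z_neq0] | Lz]; last first.
  have z_neq0 := L_neq0 _ Lz; split=> //; apply/(T_spec _ z_neq0).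
  by case: (L_lam _ Lz) => [->|[i ->]]; [left | right; exists i; left].
by case: (Tz z_neq0) => [->|[i [->|->]]]; rewrite ?L_conj.
Qed.
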